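(* With $h$ as defined in the context, the function $x\mapsto h(x)/(x+1)$ is strictly decreasing on $(-1,\infty)$ and the function $x\mapsto h(x)(x+1)$ is strictly increasing on $(-1,\infty)$.
   Context: Let $u_n=(-1)^{s_2(n)}$, where $s_2(n)$ is the sum of the binary digits of the non-negative integer $n$ (Thue–Morse sequence with values $\pm1$). For real $x>-2$ define $h(x)=\prod_{n=1}^\infty\left(\frac{2n+x}{2n+1+x}\right)^{u_n}$ (limit of partial products; it converges). *)

From Stdlib Require Import Reals Arith ZArith.
From Coquelicot Require Import Coquelicot.
Open Scope R_scope.

(* sum of binary digits, computed with fuel (fuel n >= n suffices) *)
Fixpoint s2_aux (fuel n : nat) : nat :=
  match fuel with
  | O => O
  | S f => match n with
           | O => O
           | _ => Nat.modulo n 2 + s2_aux f (Nat.div n 2)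
           end
  end.

Definition s2 (n : nat) : nat := s2_aux n n.

(* Thue--Morse sequence with values +-1, as an integer exponent *)
Definition u (n : nat) : Z := if Nat.even (s2 n) then 1%Z else (-1)%Z.

Definition factor (x : R) (n : nat) : R :=
  powerRZ ((2 * INR n + x) / (2 * INR n + 1 + x)) (u n).

Fixpoint partial_prod (x : R) (N : nat) : R :=
  match N with
  | O => 1
  | S M => partial_prod x M * factor x (S M)
  end.

Definition h (x : R) : R := real (Lim_seq (partial_prod x)).

(* Write p = 2n+x, q = 2n+y for x <= y and ratio(m) = (m+y)/(m+x).  The n-th factor is
   (p/(p+1))^(+-1), and in both cases factor(y,n)/factor(x,n) lies between the reciprocal of
   ratio(2n)/ratio(2n+1) = q(p+1)/(p(q+1)) and that number itself.  Since ratio decreases,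
   these bounds telescope over n = 1..N to ratio(2) = (2+y)/(2+x), which is strictly less
   than (1+y)/(1+x): so h(y) <= ratio(2) h(x) and h(x) <= ratio(2) h(y) give both claims.

   For convergence, u(2k) = u(k) and u(2k+1) = -u(k) pair the factors 2k, 2k+1 into
   c_k^(u_k) with c_k = (4k+x)(4k+3+x)/((4k+1+x)(4k+2+x)) in [1 - 1/(k+1)^2, 1].  The odd
   partial products are then P_1 B_K^2 / A_K, where A_K is the product of all c_k and B_K
   that of the c_k with u_k = 1; both are decreasing and bounded below by 1/2. *)

From Stdlib Require Import Reals Lia Lra.
From Coquelicot Require Import Coquelicot.
Open Scope R_scope.

Lemma s2_aux_0 f : s2_aux f 0 = 0%nat.
Proof. destruct f; reflexivity. Qed.

Lemma s2_aux_S f n : s2_aux (S f) n = (n mod 2 + s2_aux f (n / 2))%nat.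
Proof. destruct n; [simpl; now rewrite s2_aux_0 | reflexivity]. Qed.

Lemma half_digit q r : (r < 2)%nat -> ((2 * q + r) / 2 = q /\ (2 * q + r) mod 2 = r)%nat.
Proof.
  intros Hr. split; symmetry; [apply (Nat.div_unique _ _ _ r) | apply (Nat.mod_unique _ _ q)]; lia.
Qed.

Lemma half_lt n : (1 <= n -> n / 2 < n)%nat.
Proof. intros Hn. apply Nat.div_lt; lia. Qed.

Lemma s2_aux_fuel f g n : (n <= f)%nat -> (n <= g)%nat -> s2_aux f n = s2_aux g n.
Proof.
  revert g n; induction f as [|f IH]; intros g n Hf Hg.
  - replace n with 0%nat by lia. now rewrite !s2_aux_0.
  - destruct g as [|g]; [replace n with 0%nat by lia; now rewrite !s2_aux_0|].
    rewrite !s2_aux_S. destruct n as [|n]; [now rewrite !s2_aux_0|].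
    pose proof (half_lt (S n)). f_equal. apply IH; lia.
Qed.

Lemma s2_digit q r : (r < 2)%nat -> (1 <= 2 * q + r)%nat -> s2 (2 * q + r) = (r + s2 q)%nat.
Proof.
  intros Hr Hn. destruct (half_digit q r Hr) as [Hq Hm].
  unfold s2. destruct (2 * q + r)%nat as [|n] eqn:E; [lia|].
  rewrite s2_aux_S, Hq, Hm. f_equal. apply s2_aux_fuel; pose proof (half_lt (S n)); lia.
Qed.

Lemma u_cases n : u n = 1%Z \/ u n = (-1)%Z.
Proof. unfold u. destruct (Nat.even (s2 n)); auto. Qed.

Lemma u_double k : (1 <= k)%nat -> u (2 * k) = u k.
Proof.
  intros Hk. unfold u. rewrite <- (Nat.add_0_r (2 * k)), s2_digit by lia. reflexivity.
Qed.

Lemma u_double_succ k : u (2 * k + 1) = Z.opp (u k).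
Proof.
  unfold u. rewrite s2_digit by lia. simpl plus. rewrite Nat.even_succ, <- Nat.negb_even.
  now destruct (Nat.even (s2 k)).
Qed.

Definition within_factor (r a a' : R) : Prop := a' <= r * a /\ a <= r * a'.

Lemma within_factor_inv r a a' :
  0 < a -> 0 < a' -> within_factor r a a' -> within_factor r (/ a) (/ a').
Proof.
  intros Ha Ha' [H1 H2].
  assert (Hi : 0 < / (a * a')) by (apply Rinv_0_lt_compat; nra).
  split.
  - replace (/ a') with (a * / (a * a')) by (field; lra).
    replace (r * / a) with (r * a' * / (a * a')) by (field; lra).
    apply Rmult_le_compat_r; lra.
  - replace (/ a) with (a' * / (a * a')) by (field; lra).
    replace (r * / a') with (r * a * / (a * a')) by (field; lra).
    apply Rmult_le_compat_r; lra.
Qed.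

Lemma within_factor_mult r s a a' c c' :
  0 <= a' -> 0 <= a -> 0 <= c' -> 0 <= c ->
  within_factor r a a' -> within_factor s c c' -> within_factor (r * s) (a * c) (a' * c').
Proof.
  intros Ha' Ha Hc' Hc [H1 H2] [H3 H4].
  split.
  - replace (r * s * (a * c)) with ((r * a) * (s * c)) by ring.
    apply Rmult_le_compat; assumption.
  - replace (r * s * (a' * c')) with ((r * a') * (s * c')) by ring.
    apply Rmult_le_compat; assumption.
Qed.

Lemma within_factor_weaken r r' a a' :
  0 <= a -> 0 <= a' -> r <= r' -> within_factor r a a' -> within_factor r' a a'.
Proof. intros Ha Ha' Hr [H1 H2]. split; nra. Qed.

Lemma within_factor_lim r (a a' : nat -> R) (l l' : R) :
  is_lim_seq a l -> is_lim_seq a' l' -> (forall n, within_factor r (a n) (a' n)) ->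
  within_factor r l l'.
Proof.
  intros Hl Hl' H. split.
  - apply (is_lim_seq_le a' (fun n => r * a n) l' (r * l)); [apply H | assumption |].
    apply is_lim_seq_scal_l with (a := r) (lu := l). assumption.
  - apply (is_lim_seq_le a (fun n => r * a' n) l (r * l')); [apply H | assumption |].
    apply is_lim_seq_scal_l with (a := r) (lu := l'). assumption.
Qed.

Lemma within_factor_frac p q :
  0 < p -> p <= q -> within_factor ((q / p) / ((q + 1) / (p + 1))) (p / (p + 1)) (q / (q + 1)).
Proof.
  intros Hp Hpq. split.
  - right. field. lra.
  - replace ((q / p) / ((q + 1) / (p + 1)) * (q / (q + 1)))
      with (p / (p + 1) + (q - p) * (q * (p + 1) + p * (q + 1)) / (p * (p + 1) * (q + 1) * (q + 1)))
      by (field; lra).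
    assert (0 <= (q - p) * (q * (p + 1) + p * (q + 1)) / (p * (p + 1) * (q + 1) * (q + 1))).
    { apply Rmult_le_pos; [apply Rmult_le_pos; nra | left; apply Rinv_0_lt_compat; nra]. }
    lra.
Qed.

Definition factor_base (x : R) (n : nat) : R := (2 * INR n + x) / (2 * INR n + 1 + x).

Lemma factor_eq x n :
  factor x n = if Z.eqb (u n) 1 then factor_base x n else / factor_base x n.
Proof.
  unfold factor. fold (factor_base x n).
  destruct (u_cases n) as [-> | ->]; simpl; now rewrite Rmult_1_r.
Qed.

Lemma INR_ge_1 n : (1 <= n)%nat -> 1 <= INR n.
Proof. intros Hn. apply (le_INR 1 n) in Hn. exact Hn. Qed.

Lemma factor_base_pos x n : -1 < x -> (1 <= n)%nat -> 0 < factor_base x n.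
Proof. intros Hx Hn. pose proof (INR_ge_1 n Hn). apply Rdiv_lt_0_compat; lra. Qed.

Lemma factor_pos x n : -1 < x -> (1 <= n)%nat -> 0 < factor x n.
Proof.
  intros Hx Hn. pose proof (factor_base_pos x n Hx Hn).
  rewrite factor_eq. destruct (Z.eqb (u n) 1); [| apply Rinv_0_lt_compat]; assumption.
Qed.

Lemma partial_prod_pos x N : -1 < x -> 0 < partial_prod x N.
Proof.
  intros Hx. induction N as [|N IH]; simpl; [lra|].
  apply Rmult_lt_0_compat; [assumption | apply factor_pos; [assumption | lia]].
Qed.

Definition ratio (x y m : R) : R := (m + y) / (m + x).

Lemma ratio_ge_1 x y m : x <= y -> 0 < m + x -> 1 <= ratio x y m.
Proof.
  intros Hxy Hm. unfold ratio. apply Rle_div_r; lra.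
Qed.

Lemma ratio_antitone x y m m' : x <= y -> 0 < m + x -> m <= m' -> ratio x y m' <= ratio x y m.
Proof.
  intros Hxy Hm Hmm'. unfold ratio.
  replace ((m' + y) / (m' + x)) with (1 + (y - x) * / (m' + x)) by (field; lra).
  replace ((m + y) / (m + x)) with (1 + (y - x) * / (m + x)) by (field; lra).
  apply Rplus_le_compat_l, Rmult_le_compat_l; [lra|]. apply Rinv_le_contravar; lra.
Qed.

Lemma within_factor_factor x y n : -1 < x -> x <= y -> (1 <= n)%nat ->
  within_factor (ratio x y (2 * INR n) / ratio x y (2 * INR n + 1)) (factor x n) (factor y n).
Proof.
  intros Hx Hxy Hn. pose proof (INR_ge_1 n Hn).
  assert (Hbase : within_factor (ratio x y (2 * INR n) / ratio x y (2 * INR n + 1))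
                    (factor_base x n) (factor_base y n)).
  { unfold ratio, factor_base.
    replace (2 * INR n + 1 + x) with (2 * INR n + x + 1) by ring.
    replace (2 * INR n + 1 + y) with (2 * INR n + y + 1) by ring.
    apply within_factor_frac; lra. }
  rewrite !factor_eq. destruct (Z.eqb (u n) 1); [assumption|].
  apply within_factor_inv; [apply factor_base_pos; auto; lra .. | assumption].
Qed.

Lemma within_factor_partial_prod_telescoped x y N : -1 < x -> x <= y -> (1 <= N)%nat ->
  within_factor (ratio x y 2 / ratio x y (2 * INR N + 1)) (partial_prod x N) (partial_prod y N).
Proof.
  intros Hx Hxy HN. induction HN as [|N HN IH].
  - simpl partial_prod. rewrite !Rmult_1_l. replace 2 with (2 * INR 1) at 1 by (simpl; ring).
    apply within_factor_factor; auto.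
  - pose proof (INR_ge_1 N HN). rewrite S_INR in *.
    assert (Hanti : ratio x y (2 * (INR N + 1)) <= ratio x y (2 * INR N + 1))
      by (apply ratio_antitone; lra).
    assert (H2 : 1 <= ratio x y 2) by (apply ratio_ge_1; lra).
    assert (H3 : 1 <= ratio x y (2 * INR N + 1)) by (apply ratio_ge_1; lra).
    assert (H4 : 1 <= ratio x y (2 * (INR N + 1) + 1)) by (apply ratio_ge_1; lra).
    pose proof (partial_prod_pos x N Hx). pose proof (partial_prod_pos y N ltac:(lra)).
    pose proof (factor_pos x (S N) Hx ltac:(lia)).
    pose proof (factor_pos y (S N) ltac:(lra) ltac:(lia)).
    simpl partial_prod. apply within_factor_weaken with
      (ratio x y 2 / ratio x y (2 * INR N + 1) *
       (ratio x y (2 * (INR N + 1)) / ratio x y (2 * (INR N + 1) + 1))); [nra .. | |].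
    + replace (ratio x y 2 / ratio x y (2 * INR N + 1) *
               (ratio x y (2 * (INR N + 1)) / ratio x y (2 * (INR N + 1) + 1)))
        with (ratio x y 2 / ratio x y (2 * (INR N + 1) + 1) *
              (ratio x y (2 * (INR N + 1)) / ratio x y (2 * INR N + 1))) by (field; lra).
      rewrite <- (Rmult_1_r (ratio x y 2 / _)) at 2.
      apply Rmult_le_compat_l.
      * apply Rmult_le_pos; [lra | left; apply Rinv_0_lt_compat; lra].
      * apply Rle_div_l; lra.
    + apply within_factor_mult; [lra .. | exact IH |].
      rewrite <- S_INR. apply within_factor_factor; auto; lia.
Qed.

Lemma within_factor_partial_prod x y N : -1 < x -> x <= y ->
  within_factor (ratio x y 2) (partial_prod x N) (partial_prod y N).
Proof.
  intros Hx Hxy. assert (H2 : 1 <= ratio x y 2) by (apply ratio_ge_1; lra).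
  destruct N as [|N]; [simpl; split; lra|].
  pose proof (partial_prod_pos x (S N) Hx). pose proof (partial_prod_pos y (S N) ltac:(lra)).
  assert (H3 : 1 <= ratio x y (2 * INR (S N) + 1))
    by (apply ratio_ge_1; pose proof (pos_INR (S N)); lra).
  apply within_factor_weaken with (ratio x y 2 / ratio x y (2 * INR (S N) + 1)); [lra | lra | |].
  - apply Rle_div_l; nra.
  - apply within_factor_partial_prod_telescoped; auto. lia.
Qed.

Lemma is_lim_seq_decr_bounded (v : nat -> R) (M : R) :
  (forall n, v (S n) <= v n) -> (forall n, M <= v n) -> exists l, M <= l /\ is_lim_seq v l.
Proof.
  intros Hdecr Hlow. destruct (ex_finite_lim_seq_decr v M Hdecr Hlow) as [l Hl].
  exists l. split; [| exact Hl].
  apply (is_lim_seq_le (fun _ => M) v M l Hlow (is_lim_seq_const M) Hl).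
Qed.

Section SignedProduct.

Variable c : nat -> R.
Variable pos_exp : nat -> bool.
Hypothesis c_le_1 : forall k, (1 <= k)%nat -> c k <= 1.
Hypothesis c_lower : forall k, (1 <= k)%nat -> INR k * (INR k + 2) / (INR k + 1) ^ 2 <= c k.

Fixpoint prod_all (K : nat) : R :=
  match K with O => 1 | S J => prod_all J * c (S J) end.

Fixpoint prod_pos_exp (K : nat) : R :=
  match K with O => 1 | S J => prod_pos_exp J * (if pos_exp (S J) then c (S J) else 1) end.

Fixpoint signed_prod (K : nat) : R :=
  match K with O => 1 | S J => signed_prod J * (if pos_exp (S J) then c (S J) else / c (S J)) end.

Lemma c_pos k : (1 <= k)%nat -> 0 < c k.
Proof.
  intros Hk. pose proof (INR_ge_1 k Hk). eapply Rlt_le_trans; [| apply c_lower; exact Hk].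
  apply Rdiv_lt_0_compat; nra.
Qed.

Lemma prod_all_lower K : (INR K + 2) / (2 * (INR K + 1)) <= prod_all K.
Proof.
  induction K as [|K IH]; simpl prod_all; [simpl; lra|].
  pose proof (pos_INR K). rewrite S_INR.
  pose proof (c_lower (S K) ltac:(lia)) as Hc. rewrite S_INR in Hc.
  replace ((INR K + 1 + 2) / (2 * (INR K + 1 + 1)))
    with ((INR K + 2) / (2 * (INR K + 1)) * ((INR K + 1) * (INR K + 1 + 2) / (INR K + 1 + 1) ^ 2))
    by (field; lra).
  apply Rmult_le_compat; [apply Rlt_le, Rdiv_lt_0_compat; nra .. | assumption | assumption].
Qed.

Lemma prod_all_ge_half K : 1 / 2 <= prod_all K.
Proof.
  eapply Rle_trans; [| apply prod_all_lower]. pose proof (pos_INR K).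
  replace ((INR K + 2) / (2 * (INR K + 1))) with (1 / 2 + / (2 * (INR K + 1))) by (field; lra).
  assert (0 < / (2 * (INR K + 1))) by (apply Rinv_0_lt_compat; lra). lra.
Qed.

Lemma prod_all_decr K : prod_all (S K) <= prod_all K.
Proof.
  simpl. pose proof (prod_all_ge_half K). pose proof (c_le_1 (S K) ltac:(lia)).
  pose proof (c_pos (S K) ltac:(lia)). nra.
Qed.

Lemma prod_all_le_prod_pos_exp K : prod_all K <= prod_pos_exp K.
Proof.
  induction K as [|K IH]; simpl; [lra|].
  pose proof (prod_all_ge_half K). pose proof (c_le_1 (S K) ltac:(lia)).
  pose proof (c_pos (S K) ltac:(lia)). destruct (pos_exp (S K)); nra.
Qed.

Lemma prod_pos_exp_decr K : prod_pos_exp (S K) <= prod_pos_exp K.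
Proof.
  simpl. pose proof (prod_all_ge_half K). pose proof (prod_all_le_prod_pos_exp K).
  pose proof (c_le_1 (S K) ltac:(lia)). pose proof (c_pos (S K) ltac:(lia)).
  destruct (pos_exp (S K)); nra.
Qed.

Lemma signed_prod_mul_prod_all K : signed_prod K * prod_all K = prod_pos_exp K * prod_pos_exp K.
Proof.
  induction K as [|K IH]; simpl; [ring|].
  pose proof (c_pos (S K) ltac:(lia)).
  destruct (pos_exp (S K)).
  - transitivity (signed_prod K * prod_all K * (c (S K) * c (S K))); [ring|]. rewrite IH. ring.
  - transitivity (signed_prod K * prod_all K); [field; lra|]. rewrite IH. ring.
Qed.

Lemma signed_prod_allvg : exists L, 0 < L /\ is_lim_seq signed_prod L.
Proof.
  destruct (is_lim_seq_decr_bounded prod_all (1 / 2) prod_all_decr prod_all_ge_half)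
    as [LA [HLA HA]].
  destruct (is_lim_seq_decr_bounded prod_pos_exp (1 / 2) prod_pos_exp_decr
              (fun K => Rle_trans _ _ _ (prod_all_ge_half K) (prod_all_le_prod_pos_exp K)))
    as [LB [HLB HB]].
  exists (LB * LB / LA). split; [apply Rdiv_lt_0_compat; nra|].
  apply is_lim_seq_ext with (fun K => prod_pos_exp K * prod_pos_exp K / prod_all K).
  - intros K. pose proof (prod_all_ge_half K). rewrite <- signed_prod_mul_prod_all. field. lra.
  - apply is_lim_seq_div'; [apply is_lim_seq_mult' | | lra]; assumption.
Qed.

End SignedProduct.

Definition pair_factor (x : R) (k : nat) : R :=
  (4 * INR k + x) * (4 * INR k + 3 + x) / ((4 * INR k + 1 + x) * (4 * INR k + 2 + x)).

Lemma factor_pair x k : -1 < x -> (1 <= k)%nat ->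
  factor x (2 * k) * factor x (2 * k + 1)
  = if Z.eqb (u k) 1 then pair_factor x k else / pair_factor x k.
Proof.
  intros Hx Hk. pose proof (INR_ge_1 k Hk).
  rewrite !factor_eq, u_double, u_double_succ by exact Hk.
  unfold factor_base, pair_factor. rewrite plus_INR, !mult_INR. simpl INR.
  destruct (u_cases k) as [-> | ->]; simpl; field; repeat split; lra.
Qed.

Lemma pair_factor_bounds x k : -1 < x -> (1 <= k)%nat ->
  INR k * (INR k + 2) / (INR k + 1) ^ 2 <= pair_factor x k <= 1.
Proof.
  intros Hx Hk. pose proof (INR_ge_1 k Hk). unfold pair_factor. set (a := 4 * INR k + x).
  replace (4 * INR k + 3 + x) with (a + 3) by (unfold a; ring).
  replace (4 * INR k + 1 + x) with (a + 1) by (unfold a; ring).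
  replace (4 * INR k + 2 + x) with (a + 2) by (unfold a; ring).
  assert (Ha : 4 * INR k - 1 < a) by (unfold a; lra).
  replace (a * (a + 3) / ((a + 1) * (a + 2))) with (1 - 2 / ((a + 1) * (a + 2))) by (field; lra).
  replace (INR k * (INR k + 2) / (INR k + 1) ^ 2) with (1 - 1 / (INR k + 1) ^ 2) by (field; lra).
  assert (0 < 2 / ((a + 1) * (a + 2))) by (apply Rdiv_lt_0_compat; nra).
  assert (2 / ((a + 1) * (a + 2)) <= 1 / (INR k + 1) ^ 2).
  { replace (2 / ((a + 1) * (a + 2))) with (/ ((a + 1) * (a + 2) / 2)) by (field; nra).
    replace (1 / (INR k + 1) ^ 2) with (/ (INR k + 1) ^ 2) by (field; lra).
    apply Rinv_le_contravar; nra. }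
  lra.
Qed.

Lemma partial_prod_odd x K : -1 < x ->
  partial_prod x (2 * K + 1)
  = partial_prod x 1 * signed_prod (pair_factor x) (fun k => Z.eqb (u k) 1) K.
Proof.
  intros Hx. induction K as [|K IH]; [simpl; ring|].
  replace (2 * S K + 1)%nat with (S (S (2 * K + 1))) by lia.
  change (partial_prod x (S (S (2 * K + 1))))
    with (partial_prod x (2 * K + 1) * factor x (S (2 * K + 1)) * factor x (S (S (2 * K + 1)))).
  replace (S (2 * K + 1)) with (2 * S K)%nat by lia.
  replace (S (2 * S K)) with (2 * S K + 1)%nat by lia.
  rewrite Rmult_assoc, factor_pair, IH by (auto; lia). simpl signed_prod. ring.
Qed.

Lemma factor_near_1 x n : -1 < x -> (1 <= n)%nat -> 1 - / INR n <= factor x n <= 1 + / INR n.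
Proof.
  intros Hx Hn. pose proof (INR_ge_1 n Hn).
  assert (/ (2 * INR n + 1 + x) <= / INR n) by (apply Rinv_le_contravar; lra).
  assert (/ (2 * INR n + x) <= / INR n) by (apply Rinv_le_contravar; lra).
  assert (0 < / (2 * INR n + 1 + x)) by (apply Rinv_0_lt_compat; lra).
  assert (0 < / (2 * INR n + x)) by (apply Rinv_0_lt_compat; lra).
  rewrite factor_eq. unfold factor_base. destruct (Z.eqb (u n) 1).
  - replace ((2 * INR n + x) / (2 * INR n + 1 + x)) with (1 - / (2 * INR n + 1 + x))
      by (field; lra). lra.
  - replace (/ ((2 * INR n + x) / (2 * INR n + 1 + x))) with (1 + / (2 * INR n + x))
      by (field; lra). lra.
Qed.

Lemma factor_cvg x : -1 < x -> is_lim_seq (factor x) 1.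
Proof.
  intros Hx. assert (Hinv : is_lim_seq (fun n => / INR n) 0)
    by exact (is_lim_seq_inv INR p_infty is_lim_seq_INR ltac:(discriminate)).
  apply is_lim_seq_le_le_loc with (fun n => 1 - / INR n) (fun n => 1 + / INR n).
  - exists 1%nat. intros n Hn. apply factor_near_1; assumption.
  - replace (Finite 1) with (Finite (1 - 0)) by (f_equal; ring).
    apply is_lim_seq_minus'; [apply is_lim_seq_const | exact Hinv].
  - replace (Finite 1) with (Finite (1 + 0)) by (f_equal; ring).
    apply is_lim_seq_plus'; [apply is_lim_seq_const | exact Hinv].
Qed.

Lemma is_lim_seq_odd_even (v : nat -> R) (l : R) :
  is_lim_seq (fun K => v (2 * K + 1)%nat) l -> is_lim_seq (fun K => v (2 * K + 2)%nat) l ->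
  is_lim_seq v l.
Proof.
  rewrite <- !is_lim_seq_spec. intros Hodd Heven eps.
  destruct (Hodd eps) as [N1 HN1]. destruct (Heven eps) as [N2 HN2].
  exists (2 * (N1 + N2) + 2)%nat. intros n Hn.
  destruct (Nat.Even_or_Odd n) as [[k ->] | [k ->]].
  - destruct k as [|k]; [lia|]. replace (2 * S k)%nat with (2 * k + 2)%nat by lia.
    apply HN2. lia.
  - apply HN1. lia.
Qed.

Lemma partial_prod_allvg x : -1 < x -> exists L, 0 < L /\ is_lim_seq (partial_prod x) L.
Proof.
  intros Hx.
  destruct (signed_prod_allvg (pair_factor x) (fun k => Z.eqb (u k) 1)) as [L [HL HlimL]].
  - intros k Hk. apply pair_factor_bounds; assumption.
  - intros k Hk. apply pair_factor_bounds; assumption.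
  - pose proof (partial_prod_pos x 1 Hx) as HP1.
    assert (Hodd : is_lim_seq (fun K => partial_prod x (2 * K + 1)) (partial_prod x 1 * L)).
    { apply is_lim_seq_ext with
        (fun K => partial_prod x 1 * signed_prod (pair_factor x) (fun k => Z.eqb (u k) 1) K).
      - intros K. symmetry. apply partial_prod_odd, Hx.
      - apply is_lim_seq_scal_l with (a := partial_prod x 1) (lu := L). exact HlimL. }
    exists (partial_prod x 1 * L). split; [nra|].
    apply is_lim_seq_odd_even; [exact Hodd|].
    apply is_lim_seq_ext with (fun K => partial_prod x (2 * K + 1) * factor x (2 * K + 2)).
    + intros K. replace (2 * K + 2)%nat with (S (2 * K + 1)) by lia. reflexivity.
    + rewrite <- (Rmult_1_r (partial_prod x 1 * L)).
      apply is_lim_seq_mult'; [exact Hodd|].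
      apply (is_lim_seq_subseq (factor x) 1 (fun K => (2 * K + 2)%nat)); [| apply factor_cvg, Hx].
      intros P [N HN]. exists N. intros n Hn. apply HN. lia.
Qed.

Lemma h_spec x : -1 < x -> 0 < h x /\ is_lim_seq (partial_prod x) (h x).
Proof.
  intros Hx. destruct (partial_prod_allvg x Hx) as [L [HL Hlim]].
  unfold h. rewrite (is_lim_seq_unique _ _ Hlim). simpl. split; assumption.
Qed.

Lemma within_factor_h x y : -1 < x -> x <= y -> within_factor (ratio x y 2) (h x) (h y).
Proof.
  intros Hx Hxy.
  apply within_factor_lim with (partial_prod x) (partial_prod y);
    [apply h_spec; lra .. | intros N; apply within_factor_partial_prod; assumption].
Qed.

Lemma ratio_2_lt x y : -1 < x -> x < y -> ratio x y 2 * (x + 1) < y + 1.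
Proof.
  intros Hx Hxy. unfold ratio. rewrite Rmult_comm, Rmult_div_assoc.
  apply Rlt_div_l; nra.
Qed.

Theorem theorem1 :
  (forall x y : R, -1 < x -> x < y -> h y / (y + 1) < h x / (x + 1)) /\
  (forall x y : R, -1 < x -> x < y -> h x * (x + 1) < h y * (y + 1)).
Proof.
  split; intros x y Hx Hxy;
    destruct (h_spec x Hx) as [Hhx _]; destruct (h_spec y ltac:(lra)) as [Hhy _];
    destruct (within_factor_h x y Hx ltac:(lra)) as [Hhy_le Hhx_le];
    pose proof (ratio_2_lt x y Hx Hxy) as Hratio.
  - assert (Hcross : h y * (x + 1) < h x * (y + 1)) by nra.
    apply Rlt_div_l; [lra|]. rewrite Rmult_comm, Rmult_div_assoc.
    apply Rlt_div_r; lra.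
  - nra.
Qed.
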